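(* There exist universal constants $0<c\le C$ such that the following holds. Let $\mathcal{X}$ be a nonempty set, $\mathcal{Y}$ a finite set with $k=|\mathcal{Y}|\ge 2$, let $\mathcal{H}\subseteq\mathcal{Y}^{\mathcal{X}}$ be the class of all constant functions, and let $r\ge 0$ be an integer. Then \[ c(k+r)\le \mathsf{opt}_{\operatorname{bandit}}^{\operatorname{obl}}(\mathcal{H},r)\le C(k+r). \]
   Context: $\mathsf{opt}_{\operatorname{bandit}}^{\operatorname{obl}}(\mathcal{H},r)$ denotes $\mathsf{opt}_{\operatorname{bandit}}^{\operatorname{obl}}(\mathcal{P}_r)$, where $\mathcal{P}_r$ is the set of finite sequences of examples $(x,y)\in\mathcal{X}\times\mathcal{Y}$ for which some $h\in\mathcal{H}$ satisfies $h(x)\neq y$ for at most $r$ of the examples. For a set $\mathcal{P}$ of finite sequences of examples, $\mathsf{opt}_{\operatorname{bandit}}^{\operatorname{obl}}(\mathcal{P})=\inf_{\text{learner}}\sup_{S\in\mathcal{P}}$ of the expected number of mistakes of the learner on $S$ under bandit feedback: in round $t$ the learner receives the instance $x_t$ of $S$, draws a prediction $\hat y_t$ from a distribution depending on past observations and $x_t$, and observes only whether $\hat y_t$ equals the label $y_t$ of $S$; a mistake is $\hat y_t\ne y_t$. *)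

From HB Require Import structures.
From mathcomp Require Import all_boot all_order all_algebra.
From mathcomp Require Import all_classical reals constructive_ereal ereal Rstruct.
Set Implicit Arguments. Unset Strict Implicit. Unset Printing Implicit Defensive.
Import Order.TTheory GRing.Theory Num.Theory.
Local Open Scope ring_scope.
Local Open Scope classical_set_scope.

Notation R := Rdefinitions.R.

(* An example is a pair (x, y). A history entry records an instance,
   the learner's prediction, and the bandit feedback bit (prediction == label). *)
Definition history (X : Type) (Y : finType) := seq (X * Y * bool).

(* A randomized learner: given the history of past observations (most recent
   first) and the current instance, a distribution on Y. *)
Definition learner (X : Type) (Y : finType) :=
  history X Y -> X -> {ffun Y -> R}.

Definition is_distr (Y : finType) (p : {ffun Y -> R}) : Prop :=
  (forall y, 0 <= p y) /\ \sum_(y : Y) p y = 1.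

Definition valid_learner (X : Type) (Y : finType) (L : learner X Y) : Prop :=
  forall h x, is_distr (L h x).

Fixpoint exp_mistakes (X : Type) (Y : finType) (L : learner X Y)
    (h : history X Y) (S : seq (X * Y)) : R :=
  match S with
  | [::] => 0
  | (x, y) :: S' =>
      \sum_(yh : Y) L h x yh *
        ((yh != y)%:R + exp_mistakes L ((x, yh, yh == y) :: h) S')
  end.

Definition opt_bandit_obl (X : Type) (Y : finType) (P : set (seq (X * Y)))
  : \bar R :=
  ereal_inf [set ereal_sup [set (exp_mistakes L [::] S)%:E | S in P]
            | L in [set L : learner X Y | valid_learner L]].

Definition P_r (X : Type) (Y : finType) (H : set (X -> Y)) (r : nat)
  : set (seq (X * Y)) :=
  [set S | exists2 f, H f & (count (fun e => f e.1 != e.2) S <= r)%N].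

Definition opt_bandit_obl_H (X : Type) (Y : finType) (H : set (X -> Y))
  (r : nat) : \bar R := opt_bandit_obl (P_r H r).

Definition const_class (X : Type) (Y : finType) : set (X -> Y) :=
  [set f | exists y0 : Y, f = fun _ => y0].

From HB Require Import structures.
From mathcomp Require Import all_classical reals constructive_ereal ereal Rstruct.
From mathcomp Require Import all_boot all_order all_algebra.
From mathcomp Require Import zify lra ring.
Set Implicit Arguments.
Unset Strict Implicit.
Unset Printing Implicit Defensive.
Import Order.TTheory GRing.Theory Num.Theory.
Local Open Scope ring_scope.

(* Upper bound: guess uniformly until the first hit, then commit to the hit
   label with a counter that starts at k, goes up on hits and down on misses;
   the label is dropped when a miss finds the counter at 0. With y0 the best
   constant, the potential k + 1 (guessing), k - c (committed to y0 with
   counter c) or k + 2 + c (committed to another label) pays for every mistake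
   up to 2 per error of y0, giving at most k + 1 + 2r mistakes.
   Lower bound: on a single instance, a miss reveals only that the guess was
   wrong, so the n-fold repetitions of the k labels cost n (k - n) mistakes in
   total, and some label forces k/8 of them for n = k/2; the k^r label
   sequences of length r cost r (1 - 1/k) >= r/2 on average. Both kinds of
   sequences are fit by a constant with at most r errors, so every learner
   makes (k + r)/16 mistakes on one of them. *)

Lemma exists_ge_mean (T : finType) (F : T -> R) (a : R) :
  (0 < #|T|)%N -> a * #|T|%:R <= \sum_i F i -> exists i, a <= F i.
Proof.
move=> /card_gt0P[i0 _]; apply: contraPP => /forallNP F_lt.
apply/negP; rewrite -ltNge mulr_natr -sumr_const.
apply: ltr_sum => [|i _]; first by apply/hasP; exists i0; rewrite ?mem_index_enum.
by rewrite ltNge; apply/negP.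
Qed.

Lemma big_tuple_cons (T : finType) n (F : n.+1.-tuple T -> R) :
  \sum_(t : n.+1.-tuple T) F t = \sum_(x : T) \sum_(t : n.-tuple T) F [tuple of x :: t].
Proof.
rewrite pair_big (reindex (fun p : T * n.-tuple T => [tuple of p.1 :: p.2])) //=.
exists (fun t => (thead t, [tuple of behead t])) => [[x t] _ | t _].
  by congr pair; apply: val_inj.
by rewrite -tuple_eta.
Qed.

Lemma sum_point_mass (T : finType) (t : T) (F : T -> R) :
  \sum_(u : T) (u == t)%:R * F u = F t.
Proof.
rewrite (bigD1 t) //= eqxx mul1r big1 ?addr0 // => u /negbTE ->.
by rewrite mul0r.
Qed.

Lemma sum_indicator_neq (T : finType) (t : T) :
  \sum_(u : T) ((t != u)%:R : R) = #|T|%:R - 1.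
Proof.
rewrite (bigD1 t) //= eqxx add0r (eq_bigr (fun _ => 1)) => [|u]; last first.
  by rewrite eq_sym => /negbTE->.
have T_gt0 : (0 < #|T|)%N by apply/card_gt0P; exists t.
by rewrite sumr_const cardC1 -[in RHS](prednK T_gt0) -natr1 addrK.
Qed.

Section CommitLearner.
Variables (X : Type) (Y : finType).
Local Notation k := #|Y|.

(* [None]: guessing uniformly; [Some (y, c)]: committed to [y] with counter [c]. *)
Definition commit_step (s : option (Y * nat)) (yh : Y) (hit : bool) :=
  match s with
  | None => if hit then Some (yh, k) else None
  | Some (y, c) =>
      if hit then Some (y, c.+1) else if c is c'.+1 then Some (y, c') else None
  end.

Fixpoint commit_state (h : history X Y) : option (Y * nat) :=
  if h is (_, yh, hit) :: h' then commit_step (commit_state h') yh hit else None.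

Definition commit_learner : learner X Y := fun h _ =>
  if commit_state h is Some (y, _) then [ffun z => (z == y)%:R]
  else [ffun => k%:R^-1].

Lemma commit_learner_valid : (0 < k)%N -> valid_learner commit_learner.
Proof.
move=> k_gt0 h x; rewrite /commit_learner; case: commit_state => [[y _]|]; split.
- by move=> z; rewrite ffunE ler0n.
- by under eq_bigr do rewrite ffunE -[_%:R]mulr1; rewrite sum_point_mass.
- by move=> z; rewrite ffunE invr_ge0 ler0n.
- under eq_bigr do rewrite ffunE.
  have k_neq0 : k%:R != 0 :> R by rewrite pnatr_eq0 -lt0n.
  by rewrite sumr_const -[RHS](mulVf k_neq0) mulr_natr.
Qed.

Definition commit_potential (y0 : Y) (s : option (Y * nat)) : nat :=
  match s with
  | None => k.+1
  | Some (y, c) => if y == y0 then (k - c)%N else (k + 2 + c)%N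
  end.

Lemma commit_potential_committed y0 y c l :
  ((y != l) + commit_potential y0 (commit_step (Some (y, c)) y (y == l))
    <= commit_potential y0 (Some (y, c)) + 2 * (y0 != l))%N.
Proof.
case: c => [|c]; have [<-|yl] := eqVneq y l; have [<-|yy0] := eqVneq y y0;
  rewrite /= ?eqxx; try rewrite (negbTE yy0); lia.
Qed.

Lemma commit_potential_exploring y0 l : (0 < k)%N ->
  (\sum_(yh : Y) ((yh != l) + commit_potential y0 (commit_step None yh (yh == l)))
    <= k * (commit_potential y0 None + 2 * (y0 != l)))%N.
Proof.
move=> k_gt0; rewrite (bigD1 l) //= eqxx.
rewrite (eq_bigr (fun _ => k.+2)) => [|yh /negbTE->//].
rewrite sum_nat_const cardC1 /=.
by case: (eqVneq l y0) => _ /=; rewrite ?subnn; case: k k_gt0 => // m _; nia.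
Qed.

Lemma commit_learner_mistakes y0 S h : (0 < k)%N ->
  exp_mistakes commit_learner h S
    <= (commit_potential y0 (commit_state h) + 2 * count (fun e => y0 != e.2) S)%:R.
Proof.
move=> k_gt0; elim: S h => [|[x l] S IH] h /=; first by rewrite ler0n.
set m := count _ S.
case E: (commit_state h) => [[y c]|]; rewrite {1}/commit_learner E;
  under eq_bigr do rewrite ffunE.
- rewrite sum_point_mass.
  apply: le_trans (lerD (lexx _) (IH _)) _.
  rewrite -natrD ler_nat -/m.
  move: (commit_potential_committed y0 y c l); rewrite -E /=; lia.
- have IH' yh : exp_mistakes commit_learner ((x, yh, yh == l) :: h) S
      <= (commit_potential y0 (commit_step None yh (yh == l)) + 2 * m)%:R.
    by rewrite -E; exact: IH.
  rewrite -mulr_sumr ler_pdivrMl ?ltr0n //.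
  apply: le_trans (ler_sum _ (fun yh _ => lerD (lexx _) (IH' yh))) _.
  under eq_bigr do rewrite -natrD addnA.
  rewrite -natr_sum -natrM ler_nat big_split sum_nat_const -[#|xpredT|]/k.
  by have := commit_potential_exploring y0 l k_gt0; rewrite /=; nia.
Qed.
End CommitLearner.

Section AnyLearner.
Variables (X : Type) (Y : finType) (L : learner X Y) (x0 : X).
Hypothesis L_valid : valid_learner L.
Local Notation k := #|Y|.

Lemma exp_mistakes_ge0 h S : 0 <= exp_mistakes L h S.
Proof.
elim: S h => [|[x y] S IH] h //=.
apply: sumr_ge0 => yh _; apply: mulr_ge0; first by case: (L_valid h x).
by rewrite addr_ge0 ?ler0n.
Qed.

Lemma exp_mistakes_cons h x y S :
  exp_mistakes L h ((x, y) :: S)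
    = \sum_(yh : Y) L h x yh * ((yh != y)%:R + exp_mistakes L ((x, yh, yh == y) :: h) S).
Proof. by []. Qed.

Lemma sum_learner_mulr h x (a : R) : \sum_(yh : Y) L h x yh * a = a.
Proof. by rewrite -mulr_suml (proj2 (L_valid h x)) mul1r. Qed.

Lemma const_seq_mistakes_sum n h (A : {set Y}) :
  n%:R * (k%:R - #|A|%:R - n%:R)
    <= \sum_(y in ~: A) exp_mistakes L h (nseq n (x0, y)).
Proof.
elim: n h A => [|n IH] h A; first by rewrite mul0r big1.
rewrite (eq_bigr _ (fun y _ => exp_mistakes_cons h x0 y (nseq n (x0, y)))) exchange_big.
rewrite -[leLHS](sum_learner_mulr h x0); apply: ler_sum => yh _.
rewrite -mulr_sumr; apply: ler_wpM2l; first by case: (L_valid h x0).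
set A' := yh |: A.
rewrite (big_setID (~: A')) setIC (setIidPl _); last by rewrite setCS subsetUr.
apply: ler_wpDr.
  by apply: sumr_ge0 => y _; rewrite addr_ge0 ?ler0n ?exp_mistakes_ge0.
(* Whatever the label y != yh, the learner sees the same miss (x0, yh, false). *)
rewrite (eq_bigr (fun y => 1 + exp_mistakes L ((x0, yh, false) :: h) (nseq n (x0, y))));
  last by move=> y; rewrite !inE negb_or eq_sym => /andP[/negbTE-> _].
rewrite big_split sumr_const; apply: le_trans (lerD (lexx _) (IH _ A')).
have card_A' : #|A'|%:R + #|~: A'|%:R = k%:R :> R by rewrite -natrD cardsC.
have card_A'_le : #|A'|%:R <= #|A|%:R + 1 :> R.
  by rewrite natr1 ler_nat cardsU1; case: (yh \notin A).
have n_ge0 : 0 <= n%:R :> R := ler0n _ n.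
have : 0 <= (n%:R + 1) * (#|A|%:R + 1 - #|A'|%:R) :> R by apply: mulr_ge0; lra.
rewrite -natr1; nra.
Qed.

Lemma random_seq_mistakes_sum n h : (0 < k)%N ->
  \sum_(t : n.-tuple Y) exp_mistakes L h [seq (x0, y) | y <- t]
    = n%:R * (1 - k%:R^-1) * k%:R ^+ n.
Proof.
move=> k_gt0; have k_neq0 : k%:R != 0 :> R by rewrite pnatr_eq0 -lt0n.
elim: n h => [|n IH] h.
  by rewrite big1 ?mul0r // => t _; rewrite tuple0.
rewrite big_tuple_cons.
under eq_bigr => y _ do rewrite (eq_bigr _ (fun (t : n.-tuple Y) _ =>
  exp_mistakes_cons h x0 y [seq (x0, z) | z <- t])) exchange_big.
rewrite exchange_big -[RHS](sum_learner_mulr h x0); apply: eq_bigr => yh _.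
under eq_bigr do rewrite -mulr_sumr; rewrite -mulr_sumr; congr (_ * _).
under eq_bigr do rewrite big_split /= IH sumr_const card_tuple.
rewrite big_split /= sumrMnl sum_indicator_neq sumr_const -[#|_|]/k.
by rewrite -(mulr_natr (k%:R - 1)) -(mulr_natr (n%:R * _ * _)) natrX exprS; field.
Qed.

Lemma exists_const_seq_mistakes : (2 <= k)%N ->
  exists y, k%:R / 8 <= exp_mistakes L [::] (nseq k./2 (x0, y)).
Proof.
move=> k_ge2; apply: exists_ge_mean; first by case: k k_ge2.
have := const_seq_mistakes_sum k./2 [::] set0.
rewrite cards0 subr0 (eq_bigl xpredT) => [|y]; last by rewrite !inE.
apply: le_trans.
have k_eq : k%:R = (odd k)%:R + 2 * (k./2)%:R :> R.
  by rewrite -[in LHS](odd_double_half k) natrD -muln2 natrM mulrC.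
have odd_le1 : (odd k)%:R <= 1 :> R by rewrite lern1 leq_b1.
have odd_ge0 : 0 <= (odd k)%:R :> R := ler0n _ _.
have half_ge1 : 1 <= (k./2)%:R :> R by rewrite ler1n; case: k k_ge2 => [|[]].
rewrite k_eq; nra.
Qed.

Lemma exists_random_seq_mistakes r : (2 <= k)%N ->
  exists t : r.-tuple Y, r%:R / 2 <= exp_mistakes L [::] [seq (x0, y) | y <- t].
Proof.
move=> k_ge2; have k_gt0 : (0 < k)%N by case: k k_ge2.
apply: exists_ge_mean; first by rewrite card_tuple expn_gt0 k_gt0.
rewrite random_seq_mistakes_sum // card_tuple natrX.
apply: ler_wpM2r; first by rewrite exprn_ge0.
apply: ler_wpM2l; first exact: ler0n.
have : k%:R^-1 <= 2^-1 :> R by rewrite lef_pV2 ?posrE ?ler_nat ?ltr0n.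
lra.
Qed.
End AnyLearner.

Lemma opt_const_class_le (X : Type) (Y : finType) (r : nat) : (0 < #|Y|)%N ->
  (opt_bandit_obl_H (@const_class X Y) r <= (2 * (#|Y|%:R + r%:R))%:E)%E.
Proof.
move=> k_gt0; apply: ereal_inf_le.
exists (ereal_sup [set (exp_mistakes (@commit_learner X Y) [::] S)%:E
                  | S in P_r (@const_class X Y) r]).
  by exists (@commit_learner X Y) => //; exact: commit_learner_valid.
apply: ge_ereal_sup => _ [S [_ [y0 ->] err_le] <-]; rewrite lee_fin.
apply: le_trans (commit_learner_mistakes y0 S [::] k_gt0) _.
have : (count (fun e => y0 != e.2) S)%:R <= r%:R :> R by rewrite ler_nat.
have : 1 <= #|Y|%:R :> R by rewrite ler1n.
by rewrite /= natrD natrM -natr1; lra.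
Qed.

Lemma opt_const_class_ge (X : Type) (Y : finType) (r : nat) :
  inhabited X -> (2 <= #|Y|)%N ->
  ((1 / 16 * (#|Y|%:R + r%:R))%:E <= opt_bandit_obl_H (@const_class X Y) r)%E.
Proof.
move=> [x0] k_ge2; apply: le_ereal_inf_tmp => _ [L L_valid <-].
have [y] := exists_const_seq_mistakes x0 L_valid k_ge2.
have [t] := exists_random_seq_mistakes x0 L_valid r k_ge2.
set E1 := exp_mistakes L [::] (nseq _ _); set E2 := exp_mistakes L [::] (map _ _).
move=> E2_ge E1_ge; have r_ge0 : 0 <= r%:R :> R := ler0n _ _.
apply: ereal_sup_ge.
have [E21|E12] := lerP E2 E1; [exists E1%:E | exists E2%:E]; rewrite ?lee_fin; try lra.
- exists (nseq #|Y|./2 (x0, y)) => //; exists (fun _ => y); first by exists y.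
  by rewrite count_nseq /= eqxx.
- exists (map (pair x0) t) => //; exists (fun _ => y); first by exists y.
  by apply: leq_trans (count_size _ _) _; rewrite size_map size_tuple.
Qed.

Theorem proposition6p2 :
  exists c C : R, 0 < c /\ c <= C /\
    forall (X : Type) (Y : finType) (r : nat),
      inhabited X -> (2 <= #|Y|)%N ->
      ((c * (#|Y|%:R + r%:R))%:E <= opt_bandit_obl_H (@const_class X Y) r)%E /\
      (opt_bandit_obl_H (@const_class X Y) r <= (C * (#|Y|%:R + r%:R))%:E)%E.
Proof.
exists (1 / 16), 2; split; first lra; split; first lra.
move=> X Y r X_inh k_ge2; split; first exact: opt_const_class_ge.
by apply: opt_const_class_le; case: #|Y| k_ge2.
Qed.
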